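(* Let $k=1$ and let $Y$ be uniformly distributed on $\mathcal{Y}=\{y_1,\dots,y_m\}$ with $y_1\ge y_2\ge\dots\ge y_m$ distinct. Consider the ''reversal'' encoding scheme with $r=m$ symbols, $\sigma_1(y_j)=\tau_j$ and $\sigma_2(y_j)=\tau_{m+1-j}$ for all $j\in[m]$. Then (1) this scheme maximizes the eavesdropper distortion $D_{ach}(1)$ over all encoding schemes with one key bit; (2) if $\mathcal{Y}$ is regularly spaced, i.e. $\mathcal{Y}=\{y,y+d,\dots,y+(m-1)d\}$ for some $y,d\in\mathbb{R}$, then this scheme achieves $D_{ach}(1)=D_{max}$.
   Context: Single-source setting. $Y$ is a real random variable taking values in a finite set $\mathcal{Y}=\{y_1,\dots,y_m\}\subset\mathbb{R}$ of distinct values. A source and a receiver share a secret key $K$, uniform on $\{1,\dots,2^k\}$ and independent of $Y$. An encoding scheme consists of a finite set of transmission symbols $\{\tau_1,\dots,\tau_r\}$ together with, for each key value $i\in\{1,\dots,2^k\}$, an injective map $\sigma_i:\mathcal{Y}\to\{\tau_1,\dots,\tau_r\}$; the source transmits $T=\sigma_K(Y)$. An eavesdropper observes $T$ but not $K$. Her distortion is $D_{ach}(k)=\min_{\hat f}\mathbb{E}[(Y-\hat f(T))^2]$ (minimum over all functions of the observed symbol), and $D_{max}=\mathrm{var}(Y)$. *)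

From HB Require Import structures.
From mathcomp Require Import all_boot all_order all_algebra.
Set Implicit Arguments. Unset Strict Implicit. Unset Printing Implicit Defensive.
Import Order.TTheory GRing.Theory Num.Theory.
Local Open Scope ring_scope.

(* Values y_1..y_m are indexed by 'I_m (0-based: y_j of the paper is y (j-1)).
   One key bit (k = 1): key values indexed by 'I_2, each with probability 1/2.
   An encoding scheme with r symbols is sigma : 'I_2 -> 'I_m -> 'I_r,
   each sigma i injective. Y uniform on the m values, independent of K. *)

Definition is_scheme (m r : nat) (sigma : 'I_2 -> 'I_m -> 'I_r) : Prop :=
  forall i, injective (sigma i).

(* E[(Y - f(T))^2] where T = sigma_K(Y). *)
Definition distortion (R : realFieldType) (m r : nat) (y : 'I_m -> R)
  (sigma : 'I_2 -> 'I_m -> 'I_r) (f : 'I_r -> R) : R :=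
  \sum_(i < 2) \sum_(j < m) ((2 * m)%:R)^-1 * (y j - f (sigma i j)) ^+ 2.

Definition is_Dach (R : realFieldType) (m r : nat) (y : 'I_m -> R)
  (sigma : 'I_2 -> 'I_m -> 'I_r) (D : R) : Prop :=
  (exists f : 'I_r -> R, distortion y sigma f = D) /\
  (forall f : 'I_r -> R, D <= distortion y sigma f).

Definition meanY (R : realFieldType) (m : nat) (y : 'I_m -> R) : R :=
  \sum_(j < m) (m%:R)^-1 * y j.

(* D_max = var(Y) for Y uniform on the y j. *)
Definition varY (R : realFieldType) (m : nat) (y : 'I_m -> R) : R :=
  \sum_(j < m) (m%:R)^-1 * (y j - meanY y) ^+ 2.

Definition reversal (m : nat) : 'I_2 -> 'I_m -> 'I_m :=
  fun (i : 'I_2) (j : 'I_m) => if i == ord0 then j else rev_ord j.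
Arguments reversal : clear implicits.

From mathcomp Require Import all_boot all_order all_algebra.
From mathcomp Require Import ring lra zify.
Set Implicit Arguments. Unset Strict Implicit. Unset Printing Implicit Defensive.
Import Order.TTheory GRing.Theory Num.Theory.
Local Open Scope ring_scope.

(* The best estimator is the conditional mean of the values sharing a symbol.
   Under the reversal scheme symbol j carries y_j and y_(m+1-j), so
   D_ach(1) = (1/2m) sum_j (y_j - y_(m+1-j))^2 / 2.  Under any other scheme a
   symbol carries at most one value per key, and guessing the midpoint of a pair
   y_a, y_b costs (y_a - y_b)^2 / 2.  The comparison is then a maximum-weight
   matching problem with weights (y_a - y_b)^2, and monotonicity of y yields a
   dual certificate: weights u >= 0 with u_a + u_b >= (y_a - y_b)^2, tight on
   the reversal pairs (a discrete rearrangement inequality).  For regularly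
   spaced values, x |-> y_1 + y_m - x permutes the values and reverses their
   order, so every reversal pair has midpoint E[Y] and D_ach(1) = var(Y). *)

Lemma sum_sqr_sub_mean_le (R : realFieldType) (I : finType) (P : pred I)
    (z : I -> R) (x : R) :
  \sum_(k | P k) (z k - (\sum_(k | P k) z k) / \sum_(k | P k) 1) ^+ 2
    <= \sum_(k | P k) (z k - x) ^+ 2.
Proof.
set N := \sum_(k | P k) (1 : R); set mean := (\sum_(k | P k) z k) / N.
have [k0 Pk0 | P0] := pickP P; last by rewrite !big_pred0.
have N_gt0 : 0 < N.
  rewrite /N (bigD1 k0) //= ltr_pwDl // sumr_ge0 // => *; exact: ler01.
have sum_z : \sum_(k | P k) z k = mean * N by rewrite /mean mulfVK // gt_eqF.
have expand v : \sum_(k | P k) (z k - v) ^+ 2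
    = \sum_(k | P k) z k ^+ 2 - 2 * v * \sum_(k | P k) z k + v ^+ 2 * N.
  rewrite /N (eq_bigr (fun k => z k ^+ 2 - 2 * v * z k + v ^+ 2 * 1)) => [|k _].
    by rewrite big_split sumrB /= -!mulr_sumr.
  by ring.
rewrite !expand sum_z -subr_ge0.
have -> : \sum_(k | P k) z k ^+ 2 - 2 * x * (mean * N) + x ^+ 2 * N
    - (\sum_(k | P k) z k ^+ 2 - 2 * mean * (mean * N) + mean ^+ 2 * N)
    = N * (x - mean) ^+ 2 by ring.
by rewrite mulr_ge0 ?sqr_ge0 // ltW.
Qed.

Section ConditionalMean.
Variables (R : realFieldType) (m r : nat) (y : 'I_m -> R).
Variable sigma : 'I_2 -> 'I_m -> 'I_r.

Lemma distortion_fibres (f : 'I_r -> R) :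
  distortion y sigma f = ((2 * m)%:R)^-1 *
    \sum_(t : 'I_r) \sum_(p : 'I_2 * 'I_m | sigma p.1 p.2 == t) (y p.2 - f t) ^+ 2.
Proof.
rewrite /distortion pair_big /= -mulr_sumr; congr (_ * _).
rewrite (partition_big (fun p : 'I_2 * 'I_m => sigma p.1 p.2) xpredT) //=.
by apply: eq_bigr => t _; apply: eq_bigr => p /eqP ->.
Qed.

Definition cond_mean (t : 'I_r) : R :=
  (\sum_(p : 'I_2 * 'I_m | sigma p.1 p.2 == t) y p.2)
    / \sum_(p : 'I_2 * 'I_m | sigma p.1 p.2 == t) 1.

Lemma is_Dach_cond_mean : is_Dach y sigma (distortion y sigma cond_mean).
Proof.
split=> [|f]; first by exists cond_mean.
rewrite !distortion_fibres ler_wpM2l ?invr_ge0 ?ler0n //.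
by apply: ler_sum => t _; exact: sum_sqr_sub_mean_le.
Qed.

Lemma distortion_const (x : R) :
  distortion y sigma (fun=> x) = \sum_(j < m) (m%:R)^-1 * (y j - x) ^+ 2.
Proof.
rewrite /distortion big_ord_recl big_ord1 -big_split /=.
by apply: eq_bigr => j _; rewrite natrM invfM; set c := (m%:R)^-1; field.
Qed.

End ConditionalMean.

Section ReversalCost.
Variables (R : realFieldType) (m : nat) (y : 'I_m -> R).

Definition reversal_cost : R :=
  ((2 * m)%:R)^-1 * \sum_(j < m) (y j - y (rev_ord j)) ^+ 2 / 2.

(* Symbol [j] carries [y j] and [y (rev_ord j)]; whatever is guessed, the two
   squared errors add up to at least half their squared difference. *)
Lemma reversal_cost_le_distortion (f : 'I_m -> R) :
  reversal_cost <= distortion y (reversal m) f.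
Proof.
rewrite /reversal_cost /distortion big_ord_recl big_ord1 /reversal /=.
rewrite [X in _ <= _ + X](reindex_inj rev_ord_inj) /= -big_split /= mulr_sumr.
apply: ler_sum => j _; rewrite rev_ordK -mulrDr ler_wpM2l ?invr_ge0 ?ler0n //.
have := sqr_ge0 (y j + y (rev_ord j) - 2 * f j); nra.
Qed.

Lemma reversal_cost_weights (u : 'I_m -> R) :
  (forall a, u a + u (rev_ord a) = (y a - y (rev_ord a)) ^+ 2) ->
  reversal_cost = ((2 * m)%:R)^-1 * \sum_(a < m) u a.
Proof.
move=> u_rev; rewrite /reversal_cost; congr (_ * _).
under eq_bigr do rewrite -u_rev.
rewrite -mulr_suml big_split /= [X in (_ + X) / 2](reindex_inj rev_ord_inj) /=.
under [X in (_ + X) / 2]eq_bigr do rewrite rev_ordK.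
lra.
Qed.

End ReversalCost.

Section ReflectionWeights.
Variables (R : realFieldType) (Y : nat -> R) (n : nat).

(* Chosen so that the increment of [refl_slack _ b] changes sign exactly where
   its first argument crosses [n - b] (see [refl_slackSl]). *)
Definition refl_potential (k : nat) : R :=
  \sum_(0 <= i < k) 2 * (Y i - Y i.+1) * Y (n - i).

(* The constant is chosen so that [refl_slack 0 n = 0]. *)
Definition refl_weight (k : nat) : R :=
  Y k ^+ 2 + refl_potential k - (Y 0 * Y n + refl_potential n / 2).

Definition refl_slack (a b : nat) : R :=
  refl_weight a + refl_weight b - (Y a - Y b) ^+ 2.

Lemma refl_slackC a b : refl_slack a b = refl_slack b a.
Proof. by rewrite /refl_slack; ring. Qed.

Lemma refl_slackSl a b :
  refl_slack a.+1 b - refl_slack a b = 2 * (Y a - Y a.+1) * (Y (n - a) - Y b).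
Proof. by rewrite /refl_slack /refl_weight /refl_potential big_nat_recr //=; ring. Qed.

(* Moving along the antidiagonal, the two one-step increments cancel. *)
Lemma refl_slack_antidiag a : (a <= n)%N -> refl_slack a (n - a) = 0.
Proof.
elim: a => [_ | a IHa lt_an].
  by rewrite subn0 /refl_slack /refl_weight /refl_potential big_geq //; field.
set b := (n - a.+1)%N.
have def_na : (n - a = b.+1)%N by rewrite /b; lia.
have def_nb : (n - b = a.+1)%N by rewrite /b; lia.
have zero_b : refl_slack b.+1 a = 0 by rewrite refl_slackC -def_na IHa // ltnW.
have := refl_slackSl a b; have := refl_slackSl b a.
rewrite def_na def_nb zero_b sub0r [refl_slack b a]refl_slackC => /eqP.
rewrite eqr_oppLR => /eqP -> /eqP; rewrite subr_eq => /eqP ->; ring.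
Qed.

Hypothesis Y_noninc : forall i j, (i <= j <= n)%N -> Y j <= Y i.

Lemma refl_slack_ge0 a b : (a <= n)%N -> (b <= n)%N -> 0 <= refl_slack a b.
Proof.
move=> le_an le_bn.
have zero_at : refl_slack (n - b) b = 0.
  by rewrite -{2}(subKn le_bn) refl_slack_antidiag ?leq_subr.
have step_ge0 k : (k < n)%N -> 0 <= Y k - Y k.+1.
  by move=> ?; rewrite subr_ge0 Y_noninc ?leqnSn.
suff : 0 <= refl_slack a b - refl_slack (n - b) b by rewrite zero_at subr0.
case: (leqP a (n - b)) => [le_a | lt_a].
- rewrite -opprB -(telescope_sumr (fun k => refl_slack k b) le_a) -sumrN.
  rewrite big_nat_cond; apply: sumr_ge0 => k /andP [/andP [le_ak lt_k] _].
  rewrite refl_slackSl -mulrN !mulr_ge0 ?step_ge0 ?opprB ?subr_ge0 ?Y_noninc //; lia.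
- rewrite -(telescope_sumr (fun k => refl_slack k b) (ltnW lt_a)).
  rewrite big_nat_cond; apply: sumr_ge0 => k /andP [/andP [le_k lt_ka] _].
  rewrite refl_slackSl !mulr_ge0 ?step_ge0 ?subr_ge0 ?Y_noninc //; lia.
Qed.

End ReflectionWeights.

Lemma reversal_certificate (R : realFieldType) m (y : 'I_m -> R) :
  (forall i j : 'I_m, (i <= j)%N -> y j <= y i) ->
  exists u : 'I_m -> R, [/\ forall a, 0 <= u a,
    forall a b, (y a - y b) ^+ 2 <= u a + u b &
    forall a, u a + u (rev_ord a) = (y a - y (rev_ord a)) ^+ 2].
Proof.
case: m y => [|n] y y_noninc; first by exists y; split=> -[].
pose Y k := y (inord k).
have yY (a : 'I_n.+1) : y a = Y a by rewrite /Y inord_val.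
have Y_noninc i j : (i <= j <= n)%N -> Y j <= Y i.
  by move=> /andP [le_ij le_jn]; rewrite y_noninc // !inordK //; lia.
have slackE (a b : 'I_n.+1) :
    refl_weight Y n a + refl_weight Y n b - (y a - y b) ^+ 2 = refl_slack Y n a b.
  by rewrite !yY.
have le_ord (a : 'I_n.+1) : (a <= n)%N by rewrite -ltnS.
have u_dom (a b : 'I_n.+1) : (y a - y b) ^+ 2 <= refl_weight Y n a + refl_weight Y n b.
  by rewrite -subr_ge0 slackE refl_slack_ge0.
exists (fun a => refl_weight Y n a); split=> [a | // | a].
- by have := u_dom a a; rewrite subrr expr0n /=; lra.
- by apply/eqP; rewrite -subr_eq0 slackE /= subSS refl_slack_antidiag.
Qed.

Lemma sum_indicator_inj (R : nzRingType) (I J : finType) (h : I -> J) (v : I -> R) i0 :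
  injective h -> \sum_i (h i == h i0)%:R * v i = v i0.
Proof.
move=> h_inj; rewrite (bigD1 i0) //= eqxx mul1r big1 ?addr0 // => i ne_i.
by rewrite (inj_eq h_inj) (negbTE ne_i) mul0r.
Qed.

Section MidpointEstimator.
Variables (R : realFieldType) (m r : nat) (y u : 'I_m -> R).

Definition midpoint (s0 s1 : 'I_m -> 'I_r) (t : 'I_r) : R :=
  match [pick a | s0 a == t], [pick b | s1 b == t] with
  | Some a, Some b => (y a + y b) / 2
  | Some a, None => y a
  | None, Some b => y b
  | None, None => 0
  end.

Lemma midpointC s0 s1 : midpoint s0 s1 =1 midpoint s1 s0.
Proof.
rewrite /midpoint => t.
by case: [pick a | s0 a == t] => [a|]; case: [pick b | s1 b == t] => [b|] //;
  rewrite addrC.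
Qed.

Definition partner_weight (s0 s1 : 'I_m -> 'I_r) (a : 'I_m) : R :=
  \sum_b (s1 b == s0 a)%:R * u b.

Hypotheses (u_ge0 : forall a, 0 <= u a)
           (u_dom : forall a b, (y a - y b) ^+ 2 <= u a + u b).

Lemma sum_partner_weight_le s0 s1 : injective s0 ->
  \sum_a partner_weight s0 s1 a <= \sum_b u b.
Proof.
move=> s0_inj; rewrite exchange_big /=; apply: ler_sum => b _.
rewrite -mulr_suml ler_piMl //.
case: (pickP (fun a => s0 a == s1 b)) => [a /eqP <- | no_a].
  by under eq_bigr do rewrite eq_sym -[_%:R]mulr1; rewrite sum_indicator_inj.
by rewrite big1 // => a _; rewrite eq_sym no_a.
Qed.

Lemma midpoint_sqr_err s0 s1 a : injective s0 -> injective s1 ->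
  (y a - midpoint s0 s1 (s0 a)) ^+ 2 <= (u a + partner_weight s0 s1 a) / 4.
Proof.
move=> s0_inj s1_inj; have pw_ge0 : 0 <= partner_weight s0 s1 a.
  by apply: sumr_ge0 => b _; rewrite mulr_ge0.
rewrite /midpoint; case: pickP => [a' /eqP /s0_inj -> | /(_ a)]; last by rewrite eqxx.
case: pickP => [b /= /eqP s1b | _].
  rewrite /partner_weight -s1b (sum_indicator_inj u b s1_inj).
  by have := u_dom a b; nra.
by rewrite subrr expr0n /=; have := u_ge0 a; lra.
Qed.

Lemma distortion_midpoint_le sigma : is_scheme sigma ->
  distortion y sigma (midpoint (sigma ord0) (sigma (lift ord0 ord0)))
    <= ((2 * m)%:R)^-1 * \sum_a u a.
Proof.
set s0 := sigma ord0; set s1 := sigma (lift ord0 ord0) => sigma_inj.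
have err0 a := midpoint_sqr_err a (sigma_inj ord0) (sigma_inj (lift ord0 ord0)).
have err1 b := midpoint_sqr_err b (sigma_inj (lift ord0 ord0)) (sigma_inj ord0).
have sum0 := sum_partner_weight_le s1 (sigma_inj ord0).
have sum1 := sum_partner_weight_le s0 (sigma_inj (lift ord0 ord0)).
rewrite /distortion big_ord_recl big_ord1 -/s0 -/s1 -!mulr_sumr -mulrDr.
rewrite ler_wpM2l ?invr_ge0 ?ler0n //.
under [X in _ + X <= _]eq_bigr do rewrite midpointC.
apply: le_trans (lerD (ler_sum _ (fun a _ => err0 a)) (ler_sum _ (fun b _ => err1 b))) _.
rewrite -!mulr_suml !big_split /=; lra.
Qed.

End MidpointEstimator.

(* The reflection [x |-> c - x] maps the value set onto itself and reverses the
   order, so it maps the decreasing list of values to its own reversal. *)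
Lemma reflection_rev_ord (R : realFieldType) m (y : 'I_m -> R) (c : R) :
  injective y -> (forall i j : 'I_m, (i <= j)%N -> y j <= y i) ->
  (forall j, exists k, y k = c - y j) ->
  forall j, y (rev_ord j) = c - y j.
Proof.
move=> y_inj y_noninc refl.
set s := map y (enum 'I_m).
set t := rev (map (fun x => c - x) s).
have s_sorted : sorted >=%R s.
  rewrite sorted_map; apply: (@sub_sorted _ (relpre val leq)) => [i j /=|].
    exact: y_noninc.
  by rewrite -sorted_map val_enum_ord iota_sorted.
have t_sorted : sorted >=%R t.
  rewrite rev_sorted sorted_map; apply: sub_sorted s_sorted => a b /=.
  by rewrite lerD2l lerN2.
have mem_s x : (x \in s) = [exists j, x == y j].
  apply/mapP/existsP => [[j _ ->] | [j /eqP ->]]; first by exists j.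
  by exists j; rewrite ?mem_enum.
have reflect_s x : x \in s -> c - x \in s.
  rewrite !mem_s => /existsP [j /eqP ->]; have [k yk] := refl j.
  by apply/existsP; exists k; rewrite yk.
have s_eq_t : s = t.
  apply: (sorted_eq ge_trans ge_anti) => //.
  have s_uniq : uniq s by rewrite map_inj_uniq ?enum_uniq.
  apply: uniq_perm => //.
    by rewrite rev_uniq map_inj_uniq // => a b /addrI /oppr_inj.
  move=> x; rewrite mem_rev; apply/idP/mapP => [/reflect_s xs | [z zs ->]].
    by exists (c - x); rewrite // opprB addrC subrK.
  exact: reflect_s.
have size_s : size s = m by rewrite size_map size_enum_ord.
have nth_s (i : 'I_m) : nth 0 s i = y i.
  by rewrite /s (nth_map i) ?size_enum_ord // nth_ord_enum.
move=> j; have : nth 0 s (rev_ord j) = nth 0 t (rev_ord j) by rewrite {1}s_eq_t.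
have lt_jm := ltn_ord j.
rewrite nth_s nth_rev size_map size_s ?rev_ord_proof // (nth_map 0) ?size_s; last by lia.
by rewrite (_ : (m - (rev_ord j).+1)%N = j) ?nth_s //=; lia.
Qed.

Lemma regular_values_reflect (R : realFieldType) m (y : 'I_m -> R) (y0 d : R) :
  (forall x, (exists j, x = y j) <-> (exists i : 'I_m, x = y0 + i%:R * d)) ->
  forall j, exists k, y k = 2 * y0 + m.-1%:R * d - y j.
Proof.
move=> y_regular j; have [i yj] := (y_regular (y j)).1 (ex_intro _ j erefl).
have [k yk] := (y_regular (y0 + (rev_ord i)%:R * d)).2 (ex_intro _ (rev_ord i) erefl).
have lt_im := ltn_ord i.
exists k; rewrite -yk yj /= (_ : (m - i.+1)%N = (m.-1 - i)%N) ?natrB; [ring | lia | lia].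
Qed.

Lemma reversal_Dach_reflect (R : realFieldType) m (y : 'I_m -> R) (c : R) :
  (0 < m)%N -> (forall j, y (rev_ord j) = c - y j) -> is_Dach y (reversal m) (varY y).
Proof.
move=> m_gt0 y_reflect; have m_neq0 : m%:R != 0 :> R by rewrite pnatr_eq0 -lt0n.
have mean_c : meanY y = c / 2.
  have sum_y : \sum_(j < m) y j + \sum_(j < m) y j = m%:R * c.
    rewrite {2}(reindex_inj rev_ord_inj) -big_split /=.
    under eq_bigr do rewrite y_reflect addrC subrK.
    by rewrite sumr_const card_ord mulr_natl.
  by rewrite /meanY -mulr_sumr; apply: (mulfI m_neq0); rewrite mulrA mulfV //; lra.
have cost_var : reversal_cost y = varY y.
  rewrite /reversal_cost /varY mean_c mulr_sumr; apply: eq_bigr => j _.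
  by rewrite y_reflect natrM; field.
split=> [|f]; first by exists (fun=> meanY y); rewrite distortion_const.
by rewrite -cost_var reversal_cost_le_distortion.
Qed.

Theorem theorem3 (R : realFieldType) (m : nat) (y : 'I_m -> R)
  (hm : (0 < m)%N) (hinj : injective y)
  (hdec : forall i j : 'I_m, (i <= j)%N -> y j <= y i) :
  (exists Drev : R, is_Dach y (reversal m) Drev /\
     forall (r : nat) (sigma : 'I_2 -> 'I_m -> 'I_r), is_scheme sigma ->
       exists D : R, is_Dach y sigma D /\ D <= Drev)
  /\
  ((exists y0 d : R, forall x : R,
       (exists j : 'I_m, x = y j) <-> (exists i : 'I_m, x = y0 + i%:R * d)) ->
   is_Dach y (reversal m) (varY y)).
Proof.
have [u [u_ge0 u_dom u_rev]] := reversal_certificate hdec.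
split.
- exists (distortion y (reversal m) (cond_mean y (reversal m))).
  split=> [|r sigma sigma_inj]; first exact: is_Dach_cond_mean.
  exists (distortion y sigma (cond_mean y sigma)).
  split; first exact: is_Dach_cond_mean.
  apply: le_trans ((is_Dach_cond_mean y sigma).2 _) _.
  apply: le_trans (distortion_midpoint_le u_ge0 u_dom sigma_inj) _.
  by rewrite -(reversal_cost_weights u_rev) reversal_cost_le_distortion.
- move=> [y0 [d y_regular]].
  apply: (reversal_Dach_reflect hm).
  exact: reflection_rev_ord hinj hdec (regular_values_reflect y_regular).
Qed.
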